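(* Under the standing assumptions below, let $U\subset G$ be a finite subset contained in an elliptic subgroup of $G$. Then $E(U)\leqslant10\delta$. If, in addition, $|U|\geqslant11N_0$, then $\lambda_0(U)\leqslant2\kappa_0+12\delta$.
   Context: Standing assumptions: $X$ is a geodesic $\delta$--hyperbolic space (distance $|x-y|$, Gromov product $(p,q)_x=\frac12(|p-x|+|q-x|-|p-q|)$, $(p,r)_x\geqslant\min\{(p,q)_x,(q,r)_x\}-\delta$); $N_0\geqslant1$; either $\delta>0$ and $\kappa_0\geqslant\delta$, or $\delta=0$, $X$ a simplicial tree with edges of length $\rho_0$ and $\kappa_0\geqslant\rho_0$. $G$ acts by isometries, $(\kappa_0,N_0)$--acylindrically: for all $x,y$ with $|x-y|\geqslant\kappa_0$ at most $N_0$ elements $g$ satisfy $|gx-x|\leqslant100\delta$, $|gy-y|\leqslant100\delta$. An elliptic subgroup is a subgroup with bounded orbits in $X$. For finite $U\subset G$, $E(U):=\inf_{x\in X}\frac1{|U|}\sum_{u\in U}|ux-x|$; a point $x_0\in X$ is fixed with $\frac1{|U|}\sum_{u\in U}|ux_0-x_0|\leqslant E(U)+\delta$, and $\lambda_0(U):=\max_{u\in U}|ux_0-x_0|$. *)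

From Stdlib Require Import Reals List.
From Coquelicot Require Import Coquelicot.
Open Scope R_scope.

Definition is_metric {X : Type} (dist : X -> X -> R) : Prop :=
  (forall x y, dist x y = 0 <-> x = y) /\
  (forall x y, dist x y = dist y x) /\
  (forall x y z, dist x z <= dist x y + dist y z).

Definition is_geodesic {X : Type} (dist : X -> X -> R) : Prop :=
  forall x y : X, exists gam : R -> X,
    gam 0 = x /\ gam (dist x y) = y /\
    forall s t, 0 <= s <= dist x y -> 0 <= t <= dist x y ->
      dist (gam s) (gam t) = Rabs (s - t).

Definition gromov {X : Type} (dist : X -> X -> R) (p q x : X) : R :=
  (dist p x + dist q x - dist p q) / 2.

Definition is_hyperbolic {X : Type} (dist : X -> X -> R) (delta : R) : Prop :=
  0 <= delta /\
  forall p q r x : X,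
    gromov dist p r x >= Rmin (gromov dist p q x) (gromov dist q r x) - delta.

(** X is (the metric realization of) a simplicial tree with edges of length
    rho0: X is a geodesic 0-hyperbolic space (R-tree) with a vertex set V
    such that distances between vertices are multiples of rho0, and every
    point of X lies on an edge, i.e. a geodesic segment between two vertices
    at distance rho0. *)
Definition is_simplicial_tree {X : Type} (dist : X -> X -> R) (rho0 : R) : Prop :=
  0 < rho0 /\ is_geodesic dist /\ is_hyperbolic dist 0 /\
  exists V : X -> Prop,
    (forall v w, V v -> V w -> exists n : nat, dist v w = INR n * rho0) /\
    (forall x, exists v w, V v /\ V w /\ dist v w = rho0 /\
                dist v x + dist x w = dist v w).

Definition is_group {G : Type} (mul : G -> G -> G) (one : G) (inv : G -> G) : Prop :=
  (forall a b c, mul a (mul b c) = mul (mul a b) c) /\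
  (forall a, mul one a = a) /\ (forall a, mul a one = a) /\
  (forall a, mul (inv a) a = one) /\ (forall a, mul a (inv a) = one).

Definition is_isometric_action {G X : Type} (mul : G -> G -> G) (one : G)
    (act : G -> X -> X) (dist : X -> X -> R) : Prop :=
  (forall x, act one x = x) /\
  (forall g h x, act (mul g h) x = act g (act h x)) /\
  (forall g x y, dist (act g x) (act g y) = dist x y).

Definition is_acylindrical {G X : Type} (act : G -> X -> X) (dist : X -> X -> R)
    (delta kappa0 : R) (N0 : nat) : Prop :=
  forall x y : X, dist x y >= kappa0 ->
    forall l : list G, NoDup l ->
      (forall g, In g l -> dist (act g x) x <= 100 * delta /\
                           dist (act g y) y <= 100 * delta) ->
      (length l <= N0)%nat.

Definition is_subgroup {G : Type} (mul : G -> G -> G) (one : G) (inv : G -> G)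
    (H : G -> Prop) : Prop :=
  H one /\ (forall a b, H a -> H b -> H (mul a b)) /\ (forall a, H a -> H (inv a)).

Definition is_elliptic_subgroup {G X : Type} (mul : G -> G -> G) (one : G)
    (inv : G -> G) (act : G -> X -> X) (dist : X -> X -> R) (H : G -> Prop) : Prop :=
  is_subgroup mul one inv H /\
  forall x : X, exists C : R, forall g h, H g -> H h ->
    dist (act g x) (act h x) <= C.

(** Finite subsets of G are represented by duplicate-free lists; |U| = length U. *)
Definition disp_sum {G X : Type} (act : G -> X -> X) (dist : X -> X -> R)
    (U : list G) (x : X) : R :=
  fold_right (fun u acc => dist (act u x) x + acc) 0 U.

Definition avg_disp {G X : Type} (act : G -> X -> X) (dist : X -> X -> R)
    (U : list G) (x : X) : R :=
  disp_sum act dist U x / INR (length U).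

Definition energy {G X : Type} (act : G -> X -> X) (dist : X -> X -> R)
    (U : list G) : Rbar :=
  Glb_Rbar (fun r => exists x : X, r = avg_disp act dist U x).

Definition lambda0 {G X : Type} (act : G -> X -> X) (dist : X -> X -> R)
    (U : list G) (x0 : X) : R :=
  fold_right (fun u acc => Rmax (dist (act u x0) x0) acc) 0 U.

From Stdlib Require Import Reals List.
From Coquelicot Require Import Coquelicot.
From Stdlib Require Import Lra Lia Classical.
Open Scope R_scope.

(* Near-optimal centres of a bounded set Y are 2e + 4 delta close: the midpoint of two of
   them is a centre whose radius is smaller by d(c1, c2)/2 - 2 delta.  An orbit Y of the
   elliptic subgroup is invariant, so every h moves a near-optimal centre c to another one:
   c is moved by at most 4 delta + 2e, whence E(U) <= 4 delta.  For lambda_0 take such a c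
   moved by at most 6 delta.  If |x0 - c| < kappa0, the triangle inequality bounds each
   |u x0 - x0| by 2 kappa0 + 6 delta.  Otherwise acylindricity along [x0, c] lets at most N0
   elements of U move x0 by at most 100 delta, so at least 10/11 of U moves it by more,
   contradicting the average bound 5 delta.  When delta = 0 that bound is 0 and U fixes x0. *)

Lemma dist_ge0 {X : Type} (dist : X -> X -> R) :
  is_metric dist -> forall x y, 0 <= dist x y.
Proof.
  intros [Hz [Hs Ht]] x y.
  pose proof (Ht x y x) as Hxyx; pose proof (proj2 (Hz x x) eq_refl).
  rewrite (Hs y x) in Hxyx; lra.
Qed.

Lemma Rbar_le_plus_epsilon (x : Rbar) (y : R) :
  (forall eps, 0 < eps -> Rbar_le x (y + eps)) -> Rbar_le x y.
Proof.
  destruct x as [x| |]; intros Hle; simpl; trivial.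
  - apply Rle_plus_epsilon; exact Hle.
  - exact (Hle 1 Rlt_0_1).
Qed.

Lemma glb_approx (E : R -> Prop) (s0 m : R) :
  E s0 -> (forall s, E s -> m <= s) ->
  exists r, (forall s, E s -> r <= s) /\
            (forall eps, 0 < eps -> exists s, E s /\ s < r + eps).
Proof.
  intros Hs0 Hm.
  destruct (Glb_Rbar_correct E) as [Hlb Hglb].
  destruct (Glb_Rbar E) as [r| |].
  - exists r; split; [exact Hlb|].
    intros eps Heps.
    destruct (classic (exists s, E s /\ s < r + eps)) as [|Hnone]; trivial.
    assert (Hle : Rbar_le (r + eps) r).
    { apply Hglb; intros s Hs; simpl.
      apply Rnot_lt_le; intros Hlt; apply Hnone; eauto. }
    simpl in Hle; lra.
  - exact (False_ind _ (Hlb s0 Hs0)).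
  - exact (False_ind _ (Hglb m Hm)).
Qed.

Section Displacements.

Context {G X : Type} (act : G -> X -> X) (dist : X -> X -> R).
Hypothesis Hmet : is_metric dist.

Definition moves_at_most (x : X) (d : R) (u : G) : bool :=
  if Rle_dec (dist (act u x) x) d then true else false.

Lemma disp_sum_ge0 (U : list G) x : 0 <= disp_sum act dist U x.
Proof.
  unfold disp_sum; induction U as [|a U IH]; simpl; [lra|].
  pose proof (dist_ge0 dist Hmet (act a x) x); lra.
Qed.

Lemma disp_le_disp_sum (U : list G) x u :
  In u U -> dist (act u x) x <= disp_sum act dist U x.
Proof.
  induction U as [|a U IH]; simpl; [tauto|].
  pose proof (disp_sum_ge0 U x) as Hsum; unfold disp_sum in *; simpl.
  pose proof (dist_ge0 dist Hmet (act a x) x).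
  intros [<-|Hu]; [|specialize (IH Hu)]; lra.
Qed.

Lemma disp_sum_le (U : list G) x B :
  (forall u, In u U -> dist (act u x) x <= B) ->
  disp_sum act dist U x <= INR (length U) * B.
Proof.
  induction U as [|a U IH]; intros HB;
    unfold disp_sum; cbn [fold_right length]; [simpl; lra|].
  rewrite S_INR.
  assert (Ha := HB a (or_introl eq_refl)).
  assert (HU : disp_sum act dist U x <= INR (length U) * B)
    by (apply IH; intros u Hu; apply HB; right; exact Hu).
  unfold disp_sum in HU; lra.
Qed.

(* Markov's inequality. *)
Lemma disp_sum_ge_count (U : list G) x d : 0 <= d ->
  d * (INR (length U) - INR (length (filter (moves_at_most x d) U)))
    <= disp_sum act dist U x.
Proof.
  intros Hd; induction U as [|a U IH];
    unfold disp_sum; cbn [fold_right length filter]; [simpl; lra|].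
  pose proof (dist_ge0 dist Hmet (act a x) x); unfold disp_sum in IH.
  unfold moves_at_most at 1.
  destruct (Rle_dec (dist (act a x) x) d); cbn [length]; rewrite ?S_INR; nra.
Qed.

Lemma disp_sum_eq_avg (U : list G) x : U <> nil ->
  disp_sum act dist U x = INR (length U) * avg_disp act dist U x.
Proof.
  intros HU; unfold avg_disp.
  assert (0 < INR (length U)) by (destruct U; [easy|apply lt_0_INR; simpl; lia]).
  field; lra.
Qed.

Lemma avg_disp_le (U : list G) x B : 0 <= B ->
  (forall u, In u U -> dist (act u x) x <= B) -> avg_disp act dist U x <= B.
Proof.
  intros HB Hdisp; pose proof (disp_sum_le U x B Hdisp).
  destruct U as [|a U].
  - unfold avg_disp; simpl; lra.
  - assert (0 < INR (length (a :: U))) by (apply lt_0_INR; simpl; lia).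
    rewrite disp_sum_eq_avg in * by easy; nra.
Qed.

Lemma lambda0_le (U : list G) x B : 0 <= B ->
  (forall u, In u U -> dist (act u x) x <= B) -> lambda0 act dist U x <= B.
Proof.
  intros HB; induction U as [|a U IH]; simpl; intros Hdisp; [lra|].
  apply Rmax_lub; [apply Hdisp|apply IH; intros]; auto.
Qed.

Lemma lambda0_le_disp_sum (U : list G) x :
  lambda0 act dist U x <= disp_sum act dist U x.
Proof.
  apply lambda0_le; [apply disp_sum_ge0|intros u; apply disp_le_disp_sum].
Qed.

Lemma energy_le_avg_disp (U : list G) x :
  Rbar_le (energy act dist U) (avg_disp act dist U x).
Proof.
  unfold energy; apply (proj1 (Glb_Rbar_correct _)); eauto.
Qed.

End Displacements.

Definition cball_covers {X : Type} (dist : X -> X -> R) (c : X) (s : R) (Y : X -> Prop) :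
  Prop := forall y, Y y -> dist c y <= s.

Section Hyperbolic.

Context {X : Type} {dist : X -> X -> R} {delta : R}.
Hypotheses (Hmet : is_metric dist) (Hgeod : is_geodesic dist)
           (Hhyp : is_hyperbolic dist delta).

Lemma geodesic_midpoint c1 c2 :
  exists m, dist c1 m = dist c1 c2 / 2 /\ dist c2 m = dist c1 c2 / 2.
Proof.
  destruct Hmet as [_ [Hs _]].
  destruct (Hgeod c1 c2) as [gam [Hg0 [Hgd Hgam]]].
  pose proof (dist_ge0 dist Hmet c1 c2).
  exists (gam (dist c1 c2 / 2)); split.
  - rewrite <- Hg0 at 1; rewrite Hgam by lra.
    rewrite Rabs_left1 by lra; lra.
  - rewrite <- Hgd at 1; rewrite Hgam by lra.
    rewrite Rabs_right by lra; lra.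
Qed.

(* The Gromov product (c1, c2)_m vanishes at a midpoint m, so the four-point condition
   makes (c1, y)_m or (c2, y)_m at most delta. *)
Lemma midpoint_cball_covers (Y : X -> Prop) c1 c2 s :
  cball_covers dist c1 s Y -> cball_covers dist c2 s Y ->
  exists m, cball_covers dist m (s + 2 * delta - dist c1 c2 / 2) Y.
Proof.
  intros H1 H2; destruct (geodesic_midpoint c1 c2) as [m [Hm1 Hm2]].
  destruct Hmet as [_ [Hs _]].
  exists m; intros y Hy.
  specialize (H1 y Hy); specialize (H2 y Hy).
  pose proof (proj2 Hhyp c1 y c2 m) as Hfour; unfold gromov in Hfour.
  rewrite Hm1, Hm2, (Hs y m), (Hs y c2) in Hfour.
  unfold Rmin in Hfour; destruct Rle_dec; lra.
Qed.

Lemma near_optimal_centres_close (Y : X -> Prop) r e c1 c2 :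
  (forall c s, cball_covers dist c s Y -> r <= s) ->
  cball_covers dist c1 (r + e) Y -> cball_covers dist c2 (r + e) Y ->
  dist c1 c2 <= 2 * e + 4 * delta.
Proof.
  intros Hr H1 H2.
  destruct (midpoint_cball_covers Y c1 c2 (r + e) H1 H2) as [m Hm].
  specialize (Hr m _ Hm); lra.
Qed.

End Hyperbolic.

Section EllipticSubgroup.

Context {X G : Type} {dist : X -> X -> R} {delta : R}.
Context {mul : G -> G -> G} {one : G} {inv : G -> G} {act : G -> X -> X}.
Hypotheses (Hmet : is_metric dist) (Hgeod : is_geodesic dist)
           (Hhyp : is_hyperbolic dist delta).
Hypotheses (Hgrp : is_group mul one inv) (Hact : is_isometric_action mul one act dist).
Context {H : G -> Prop}.
Hypothesis Hell : is_elliptic_subgroup mul one inv act dist H.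

Definition orbit (x : X) (y : X) : Prop := exists g, H g /\ y = act g x.

Lemma cball_covers_orbit_act x h c s : H h ->
  cball_covers dist c s (orbit x) -> cball_covers dist (act h c) s (orbit x).
Proof.
  destruct Hgrp as [Hassoc [Hone_l [_ [_ Hinv_r]]]].
  destruct Hact as [_ [Hmul Hiso]]; destruct Hell as [[_ [Hsub_mul Hsub_inv]] _].
  intros Hh Hc y [g [Hg ->]].
  replace (act g x) with (act h (act (mul (inv h) g) x))
    by (rewrite <- Hmul, Hassoc, Hinv_r, Hone_l; reflexivity).
  rewrite Hiso; apply Hc; exists (mul (inv h) g); auto.
Qed.

Lemma elliptic_quasi_centre (x : X) e : 0 < e ->
  exists c, forall h, H h -> dist (act h c) c <= 4 * delta + 2 * e.
Proof.
  intros He.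
  destruct Hell as [[Hsub_one _] Hbdd]; destruct (Hbdd x) as [C HC].
  assert (Hx : orbit x x) by (exists one; split; [|symmetry; apply Hact]; easy).
  destruct (glb_approx (fun s => exists c, cball_covers dist c s (orbit x)) C 0)
    as [r [Hr Happrox]].
  - exists x; intros y [g [Hg ->]].
    specialize (HC one g Hsub_one Hg); rewrite (proj1 Hact) in HC; exact HC.
  - intros s [c Hc]; specialize (Hc x Hx); pose proof (dist_ge0 dist Hmet c x); lra.
  - destruct (Happrox e He) as [s [[c Hc] Hs]].
    assert (Hce : cball_covers dist c (r + e) (orbit x))
      by (intros y Hy; specialize (Hc y Hy); lra).
    exists c; intros h Hh.
    enough (dist (act h c) c <= 2 * e + 4 * delta) by lra.
    apply (near_optimal_centres_close Hmet Hgeod Hhyp (orbit x) r);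
      [intros c' s' Hc'; eauto | apply cball_covers_orbit_act | ]; assumption.
Qed.

Lemma energy_le_of_elliptic (U : list G) : inhabited X ->
  (forall u, In u U -> H u) -> Rbar_le (energy act dist U) (4 * delta).
Proof.
  intros [x] HU; apply Rbar_le_plus_epsilon; intros eps Heps.
  destruct (elliptic_quasi_centre x (eps / 2)) as [c Hc]; [lra|].
  eapply Rbar_le_trans; [apply (energy_le_avg_disp act dist U c)|]; simpl.
  apply avg_disp_le; [pose proof (proj1 Hhyp); lra|].
  intros u Hu; specialize (Hc u (HU u Hu)); lra.
Qed.

End EllipticSubgroup.

Lemma isometry_disp_le {G X : Type} (mul : G -> G -> G) (one : G) (act : G -> X -> X)
    (dist : X -> X -> R) u x c :
  is_metric dist -> is_isometric_action mul one act dist ->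
  dist (act u x) x <= 2 * dist x c + dist (act u c) c.
Proof.
  intros [_ [Hs Ht]] [_ [_ Hiso]].
  pose proof (Ht (act u x) (act u c) x); pose proof (Ht (act u c) c x).
  rewrite Hiso, (Hs c x) in *; lra.
Qed.

Section Acylindrical.

Context {G X : Type} {mul : G -> G -> G} {one : G} {act : G -> X -> X} {dist : X -> X -> R}.
Context {delta kappa0 : R} {N0 : nat}.
Hypotheses (Hmet : is_metric dist) (Hact : is_isometric_action mul one act dist)
           (Hacyl : is_acylindrical act dist delta kappa0 N0).

Lemma acylindrical_count_le (U : list G) x c : NoDup U -> kappa0 <= dist x c ->
  (forall u, In u U -> dist (act u c) c <= 100 * delta) ->
  (length (filter (moves_at_most act dist x (100 * delta)) U) <= N0)%nat.
Proof.
  intros HU Hxc Hc; apply (Hacyl x c (Rle_ge _ _ Hxc)); [apply NoDup_filter, HU|].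
  intros g Hg; apply filter_In in Hg as [HgU Hsmall].
  unfold moves_at_most in Hsmall; destruct Rle_dec; [|discriminate].
  split; auto.
Qed.

Lemma lambda0_le_of_quasi_centre (U : list G) x0 c :
  NoDup U -> 0 < delta -> (1 <= N0)%nat -> (11 * N0 <= length U)%nat ->
  (forall u, In u U -> dist (act u c) c <= 6 * delta) ->
  avg_disp act dist U x0 <= 5 * delta ->
  lambda0 act dist U x0 <= 2 * kappa0 + 6 * delta.
Proof.
  intros HU Hd HN0 Hlen Hc Havg.
  destruct (Rlt_or_le (dist x0 c) kappa0) as [Hnear|Hfar].
  - pose proof (dist_ge0 dist Hmet x0 c).
    apply lambda0_le; [lra|]; intros u Hu.
    pose proof (isometry_disp_le mul one act dist u x0 c Hmet Hact).
    specialize (Hc u Hu); lra.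
  - exfalso.
    assert (Hsmall := acylindrical_count_le U x0 c HU Hfar).
    apply le_INR in Hsmall; [|intros u Hu; specialize (Hc u Hu); lra].
    apply le_INR in HN0; apply le_INR in Hlen; rewrite mult_INR in Hlen; simpl in HN0, Hlen.
    pose proof (disp_sum_ge_count act dist Hmet U x0 (100 * delta) ltac:(lra)).
    rewrite disp_sum_eq_avg in * by (destruct U; simpl in Hlen; [lra|easy]).
    nra.
Qed.

End Acylindrical.

Theorem proposition4p4
  (X : Type) (dist : X -> X -> R) (delta kappa0 : R) (N0 : nat)
  (G : Type) (mul : G -> G -> G) (one : G) (inv : G -> G) (act : G -> X -> X)
  (HXne : inhabited X)
  (Hmet : is_metric dist) (Hgeod : is_geodesic dist)
  (Hhyp : is_hyperbolic dist delta)
  (HN0 : (1 <= N0)%nat)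
  (Hcase : (0 < delta /\ kappa0 >= delta) \/
           (delta = 0 /\ exists rho0 : R,
              is_simplicial_tree dist rho0 /\ kappa0 >= rho0))
  (Hgrp : is_group mul one inv)
  (Hact : is_isometric_action mul one act dist)
  (Hacyl : is_acylindrical act dist delta kappa0 N0)
  (U : list G) (HU : NoDup U)
  (Hell : exists H : G -> Prop, is_elliptic_subgroup mul one inv act dist H /\
                                (forall u, In u U -> H u)) :
  Rbar_le (energy act dist U) (Finite (10 * delta)) /\
  ((11 * N0 <= length U)%nat ->
   forall x0 : X,
     Rbar_le (Finite (avg_disp act dist U x0))
             (Rbar_plus (energy act dist U) (Finite delta)) ->
     lambda0 act dist U x0 <= 2 * kappa0 + 12 * delta).
Proof.
  destruct Hell as [H [Hell HUH]].
  pose proof (proj1 Hhyp) as Hd0.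
  assert (HE : Rbar_le (energy act dist U) (4 * delta))
    by exact (energy_le_of_elliptic Hmet Hgeod Hhyp Hgrp Hact Hell U HXne HUH).
  split; [apply (Rbar_le_trans _ _ _ HE); simpl; lra|].
  intros Hlen x0 Hx0.
  assert (Havg : avg_disp act dist U x0 <= 5 * delta).
  { assert (Hle := Rbar_le_trans _ _ _ Hx0
                     (Rbar_plus_le_compat _ _ _ _ HE (Rbar_le_refl delta))).
    simpl in Hle; lra. }
  destruct Hcase as [[Hd _]|[-> [rho0 [[Hrho _] Hk]]]].
  - destruct (elliptic_quasi_centre Hmet Hgeod Hhyp Hgrp Hact Hell x0 delta Hd) as [c Hc].
    enough (lambda0 act dist U x0 <= 2 * kappa0 + 6 * delta) by lra.
    apply (lambda0_le_of_quasi_centre Hmet Hact Hacyl U x0 c); auto.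
    intros u Hu; specialize (Hc u (HUH u Hu)); lra.
  - pose proof (lambda0_le_disp_sum act dist Hmet U x0).
    rewrite disp_sum_eq_avg in * by (destruct U; simpl in Hlen; [lia|easy]).
    pose proof (pos_INR (length U)).
    nra.
Qed.
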